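(* Consider the following posets $P$ with typings $t$ (each typing is surjective onto $\mathbb{N}$): (i) $\mathbb{N}$ under divisibility, with $t(n,m)=m/n$ for $n\mid m$; (ii) the finite subsets $\mathscr{F}(\mathbb{N})$ of $\mathbb{N}$ under inclusion, with $t(S,T)=|T|-|S|+1$ for $S\subseteq T$; (iii) the finite-dimensional subspaces $\mathscr{V}(\mathbb{F}_q^\infty)$ of $\mathbb{F}_q^\infty$ under inclusion, with $t(U,V)=\dim V-\dim U+1$ for $U\subseteq V$; (iv) $\mathbb{N}$ under the usual order $\leqslant$, with $t(n,m)=m-n+1$ for $n\leqslant m$. Then the posets (i), (ii), (iii) have the reduced Möbius uncertainty property $\mathcal{R}$, while the poset (iv) does not.
   Context: Let $P$ be a locally finite poset. A typing is a map $t:P\times P\to\mathbb{N}\cup\{0\}$ with $t(x,y)\neq0$ iff $x\leqslant y$, such that the convolution $(f_1*f_2)(x,y)=\sum_{x\leqslant z\leqslant y}f_1(x,z)f_2(z,y)$ of two functions whose values depend only on $t(x,y)$ again depends only on $t(x,y)$. For a surjective typing, let $\left[\begin{smallmatrix} n\\ d\ \ k\end{smallmatrix}\right]$ denote the number of $z$ in an interval $[x,y]$ of type $n$ with $[x,z]$ of type $d$ and $[z,y]$ of type $k$ (independent of the choice of interval). $(P,t)$ has property $\mathcal{R}$ if for all functions $f,g:\mathbb{N}\to\mathbb{C}$, neither identically zero, satisfying $g(n)=\sum_{d,k\in\mathbb{N}}\left[\begin{smallmatrix} n\\ d\ \ k\end{smallmatrix}\right] f(k)$ for all $n\in\mathbb{N}$,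 at least one of $\{n: f(n)\neq 0\}$ and $\{n:g(n)\neq0\}$ is infinite. Concretely, the relation $g=\zeta*f$ reads: in (i) $g(n)=\sum_{d\mid n}f(d)$; in (ii) $g(n)=\sum_{k=1}^n\binom{n-1}{k-1}f(k)$; in (iii) $g(n)=\sum_{k=1}^n\binom{n-1}{k-1}_q f(k)$ with the Gaussian binomial coefficient; in (iv) $g(n)=\sum_{k=1}^n f(k)$. *)

From HB Require Import structures.
From mathcomp Require Import all_boot all_order all_algebra.
From mathcomp Require Import complex.
From mathcomp Require Import Rstruct.
Set Implicit Arguments. Unset Strict Implicit. Unset Printing Implicit Defensive.
Import Order.TTheory GRing.Theory Num.Theory.

Notation C := (complex Rdefinitions.R).

(* Gaussian binomial coefficient [n choose k]_q, via the q-Pascal rule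
   [n+1, k+1]_q = [n, k]_q + q^(k+1) [n, k+1]_q. *)
Fixpoint qbinom (q n k : nat) : nat :=
  match n, k with
  | 0, 0 => 1
  | 0, _.+1 => 0
  | _.+1, 0 => 1
  | n'.+1, k'.+1 => qbinom q n' k' + q ^ k'.+1 * qbinom q n' k'.+1
  end.

(* Incidence coefficients [n; d k]: number of z in an interval [x,y] of type n
   with [x,z] of type d and [z,y] of type k, for each of the four typed posets. *)

(* (i) N under divisibility, t(n,m) = m/n: z = x*d with d*k = n. *)
Definition coef_div (n d k : nat) : nat := (d * k == n).

(* (ii) finite subsets of N under inclusion, t(S,T) = |T|-|S|+1. *)
Definition coef_sets (n d k : nat) : nat := (d + k == n.+1) * 'C(n.-1, d.-1).

(* (iii) finite-dim subspaces of F_q^oo, t(U,V) = dim V - dim U + 1. *)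
Definition coef_subspaces (q n d k : nat) : nat :=
  (d + k == n.+1) * qbinom q n.-1 d.-1.

(* (iv) N under <=, t(n,m) = m-n+1. *)
Definition coef_chain (n d k : nat) : nat := (d + k == n.+1).

(* The relation g = zeta * f: g(n) = sum_{d,k in N} [n; d k] f(k).  For these
   typings the coefficient vanishes unless 1 <= d, k <= n, so the sum is finite. *)
Definition zeta_rel (c : nat -> nat -> nat -> nat) (f g : nat -> C) : Prop :=
  forall n : nat, (0 < n)%N ->
    g n = (\sum_(1 <= d < n.+1) \sum_(1 <= k < n.+1) (c n d k)%:R * f k)%R.

Definition infinite_support (h : nat -> C) : Prop :=
  forall N : nat, exists n : nat, (N < n)%N /\ h n <> 0%R.

Definition nonzero_fun (h : nat -> C) : Prop :=
  exists n : nat, (0 < n)%N /\ h n <> 0%R.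

Definition propertyR (c : nat -> nat -> nat -> nat) : Prop :=
  forall f g : nat -> C, nonzero_fun f -> nonzero_fun g -> zeta_rel c f g ->
    infinite_support f \/ infinite_support g.

(* For (ii) and (iii), g n = sum_k [n-1, n-k]_q f k =: qzeta q f n.  By the
   q-Pascal rule the first difference of qzeta q f is q^n times the qzeta
   transform of the rescaled shift j |-> f (j+1) / q^j, so if f and g both have
   finite support, induction on the support of f gives f = 0.  For (i), if k0
   is the least point of the support of f and p is a prime beyond both
   supports, k0 is the only divisor of k0 * p in the support of f, hence
   g (k0 * p) = f k0 <> 0.  For (iv), f = delta_1 - delta_2 has partial sums
   g = delta_1. *)

From mathcomp Require Import all_boot all_order all_algebra.
From mathcomp Require Import complex Rstruct zify ring.
From Stdlib Require Import Classical.
Set Implicit Arguments. Unset Strict Implicit. Unset Printing Implicit Defensive.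
Import Order.TTheory GRing.Theory Num.Theory.
Local Open Scope ring_scope.

Definition eventually_zero (h : nat -> C) : Prop :=
  exists N, forall n, (N < n)%N -> h n = 0.

Lemma infinite_supportVeventually_zero (h : nat -> C) :
  infinite_support h \/ eventually_zero h.
Proof.
have [|not_inf] := classic (infinite_support h); first by left.
right; apply: NNPP => not_ev; apply: not_inf => N.
apply: NNPP => no_n; apply: not_ev; exists N => n Nn.
by apply: NNPP => hn; apply: no_n; exists n.
Qed.

Lemma eventually_zero_finite_support (h : nat -> C) :
  eventually_zero h -> ~ infinite_support h.
Proof. by move=> [N hN] /(_ N) [n [Nn]]; rewrite hN. Qed.

Lemma propertyR_intro c :
  (forall f g, nonzero_fun f -> eventually_zero f -> eventually_zero g ->
     zeta_rel c f g -> False) ->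
  propertyR c.
Proof.
move=> no_finite_pair f g f_nz _ fg.
have [|f_fin] := infinite_supportVeventually_zero f; first by left.
have [|g_fin] := infinite_supportVeventually_zero g; first by right.
by case: (no_finite_pair f g).
Qed.

Lemma sum_antidiagonal (w : nat -> nat) (f : nat -> C) n :
  \sum_(1 <= d < n.+1) \sum_(1 <= k < n.+1) ((d + k == n.+1) * w d)%:R * f k
  = \sum_(1 <= k < n.+1) (w (n.+1 - k)%N)%:R * f k.
Proof.
rewrite exchange_big /=; apply: eq_big_nat => k /andP[k1 kn].
have k_mem : (n.+1 - k)%N \in index_iota 1 n.+1 by rewrite mem_index_iota; lia.
rewrite (bigD1_seq _ k_mem (iota_uniq _ _)) /=.
have -> : (n.+1 - k + k == n.+1)%N by apply/eqP; lia.
rewrite mul1n big1 ?addr0 // => d /eqP d_ne.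
have -> : (d + k == n.+1) = false by apply/negP => /eqP; lia.
by rewrite mul0n mul0r.
Qed.

Lemma sum_divisor_pairs (f : nat -> C) n : (0 < n)%N ->
  \sum_(1 <= d < n.+1) \sum_(1 <= k < n.+1) (d * k == n)%:R * f k
  = \sum_(1 <= k < n.+1 | (k %| n)%N) f k.
Proof.
move=> n_gt0; rewrite exchange_big [RHS]big_mkcond /=.
apply: eq_big_nat => k /andP[k1 kn].
have [/dvdnP[d n_eq]|k_ndvd] := boolP (k %| n)%N; last first.
  rewrite big1 // => d _.
  have -> : (d * k == n) = false by apply: contraNF k_ndvd => /eqP <-; exact: dvdn_mull.
  by rewrite mul0r.
subst n; have d_mem : d \in index_iota 1 (d * k).+1 by rewrite mem_index_iota; nia.
rewrite (bigD1_seq _ d_mem (iota_uniq _ _)) /=.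
rewrite eqxx mul1r big1 ?addr0 // => e /eqP e_ne.
have -> : (e * k == d * k) = false by apply/negP => /eqP; nia.
by rewrite mul0r.
Qed.

Lemma qbinom_small q n k : (n < k)%N -> qbinom q n k = 0%N.
Proof.
elim: n k => [|n IHn] [|k] //= lt_nk.
by rewrite (IHn k) // (IHn k.+1) ?muln0 // ltnW.
Qed.

Lemma qbinomn q n : qbinom q n n = 1%N.
Proof. by elim: n => //= n ->; rewrite qbinom_small ?muln0. Qed.

Lemma qbinom0 q n : qbinom q n 0 = 1%N.
Proof. by case: n. Qed.

Lemma qbinom_binomial n k : qbinom 1 n k = 'C(n, k).
Proof. by elim: n k => [|n IHn] [|k] //=; rewrite !IHn exp1n mul1n binS addnC. Qed.

Definition qzeta (q : nat) (f : nat -> C) (n : nat) : C :=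
  \sum_(1 <= k < n.+1) (qbinom q n.-1 (n - k))%:R * f k.

Definition qshift (q : nat) (f : nat -> C) (j : nat) : C := f j.+1 / (q ^ j)%:R.

Lemma zeta_rel_subspaces q f g :
  zeta_rel (coef_subspaces q) f g -> forall n, (0 < n)%N -> g n = qzeta q f n.
Proof.
move=> fg n n_gt0; rewrite fg // /coef_subspaces.
rewrite (sum_antidiagonal (fun d => qbinom q n.-1 d.-1)).
apply: eq_big_nat => k /andP[k_gt0 k_le].
by have -> : ((n.+1 - k).-1 = n - k)%N by lia.
Qed.

Lemma qzeta_succ q f m :
  qzeta q f m.+2 = qzeta q f m.+1 +
    \sum_(1 <= k < m.+3) (q ^ (m.+2 - k) * qbinom q m (m.+2 - k))%:R * f k.
Proof.
rewrite /qzeta !succnK big_nat_recr // [X in _ + X]big_nat_recr //.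
rewrite subnn !qbinom0 muln1 addrA -big_split; congr (_ + _).
apply: eq_big_nat => k /andP[k_gt0 k_le].
have -> : (m.+2 - k = (m.+1 - k).+1)%N by lia.
by rewrite /= natrD mulrDl.
Qed.

Lemma qzeta_diff q f m : (0 < q)%N ->
  qzeta q f m.+2 - qzeta q f m.+1 = (q ^ m.+1)%:R * qzeta q (qshift q f) m.+1.
Proof.
move=> q_gt0; rewrite qzeta_succ [qzeta q f m.+1 + _]addrC addrK.
rewrite big_ltn // subn1 qbinom_small // muln0 mul0r add0r big_add1 /=.
rewrite /qzeta mulr_sumr; apply: eq_big_nat => j /andP[j_gt0 j_le].
have q_neq0 : (q ^ j)%:R != 0 :> C by rewrite pnatr_eq0 -lt0n expn_gt0 q_gt0.
have -> : (q ^ m.+1 = q ^ (m.+1 - j) * q ^ j)%N by rewrite -expnD subnK.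
by rewrite subSS /qshift !natrM; field.
Qed.

Lemma qzeta_of_support1 q f N :
  (forall k, (1 < k)%N -> f k = 0) -> qzeta q f N.+1 = f 1%N.
Proof.
move=> f_gt1; rewrite /qzeta big_ltn // subn1 qbinomn mul1r.
rewrite big_nat_cond big1 ?addr0 // => k /andP[/andP[k_gt1 _] _].
by rewrite f_gt1 ?mulr0.
Qed.

Lemma qzeta_uncertainty q f : (0 < q)%N ->
  eventually_zero f -> eventually_zero (qzeta q f) ->
  forall k, (0 < k)%N -> f k = 0.
Proof.
move=> q_gt0 [M]; elim: M f => [|M IHM] f f_gtM [N qzeta_gtN]; first exact: f_gtM.
have q_neq0 j : (q ^ j)%:R != 0 :> C by rewrite pnatr_eq0 -lt0n expn_gt0 q_gt0.
have shift_gtM j : (M < j)%N -> qshift q f j = 0 by move=> ?; rewrite /qshift f_gtM ?mul0r.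
have shift_ev : eventually_zero (qzeta q (qshift q f)).
  exists N => -[//|m] lt_Nm; apply/eqP.
  rewrite -(mulrI_eq0 _ (lregP (q_neq0 m.+1))) -qzeta_diff //.
  by rewrite !qzeta_gtN ?subrr //; apply: ltnW.
have f_gt1 k : (1 < k)%N -> f k = 0.
  case: k => [|[|j]] // _; apply/eqP.
  rewrite -(mulIr_eq0 _ (rregP (invr_neq0 (q_neq0 j.+1)))).
  by apply/eqP; apply: (IHM _ shift_gtM shift_ev).
case=> [|[|k]] // _; last exact: f_gt1.
by rewrite -(qzeta_of_support1 q N f_gt1) qzeta_gtN.
Qed.

Lemma propertyR_subspaces q : (0 < q)%N -> propertyR (coef_subspaces q).
Proof.
move=> q_gt0; apply: propertyR_intro => f g [k [k_gt0 fk_neq0]] f_ev [N g_gtN] fg.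
apply: fk_neq0; apply: (qzeta_uncertainty q_gt0 f_ev _ k_gt0).
by exists N.+1 => n lt_Nn; rewrite -(zeta_rel_subspaces fg) ?g_gtN //; lia.
Qed.

Lemma propertyR_sets : propertyR coef_sets.
Proof.
move=> f g f_nz g_nz fg; apply: (propertyR_subspaces (ltn0Sn 0)) => // n n_gt0.
rewrite fg //; apply: eq_bigr => d _; apply: eq_bigr => k _.
by rewrite /coef_sets /coef_subspaces qbinom_binomial.
Qed.

Lemma zeta_rel_div f g : zeta_rel coef_div f g ->
  forall n, (0 < n)%N -> g n = \sum_(1 <= k < n.+1 | (k %| n)%N) f k.
Proof. by move=> fg n n_gt0; rewrite fg // sum_divisor_pairs. Qed.

Lemma propertyR_div : propertyR coef_div.
Proof.
apply: propertyR_intro => f g [k [k_gt0 fk_neq0]] [M f_gtM] [N g_gtN] fg.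
have supp_f : exists k, (0 < k)%N && (f k != 0) by exists k; rewrite k_gt0; apply/eqP.
case: (ex_minnP supp_f) => k0 /andP[k0_gt0 fk0_neq0] k0_min.
have [p lt_p p_prime] := prime_above (maxn N M).
move: lt_p; rewrite gtn_max => /andP[lt_Np lt_Mp].
have supp_le_M j : f j != 0 -> (j <= M)%N.
  by apply: contraR; rewrite -ltnNge => /f_gtM ->.
have only_k0 j : (0 < j)%N -> (j %| k0 * p)%N -> f j != 0 -> j = k0.
  move=> j_gt0 j_dvd fj_neq0.
  have le_k0j : (k0 <= j)%N by apply: k0_min; rewrite j_gt0.
  have j_coprime_p : coprime j p.
    rewrite coprime_sym prime_coprime //; apply: contraL (supp_le_M j fj_neq0).
    by move/(dvdn_leq j_gt0) => le_pj; rewrite -ltnNge (leq_trans lt_Mp).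
  have /(dvdn_leq k0_gt0) : (j %| k0)%N by rewrite -(Gauss_dvdl _ j_coprime_p).
  by move=> le_jk0; apply/eqP; rewrite eqn_leq le_jk0.
move/eqP: fk0_neq0; apply; rewrite -(g_gtN (k0 * p)%N); last by nia.
have k0_mem : k0 \in index_iota 1 (k0 * p).+1 by rewrite mem_index_iota; nia.
rewrite (zeta_rel_div fg) ?muln_gt0 ?k0_gt0 ?prime_gt0 // big_mkcond.
rewrite (bigD1_seq _ k0_mem) ?iota_uniq //= dvdn_mulr // big1_seq ?addr0 // => j /andP[j_neq j_mem].
case: ifP => // j_dvd; apply/eqP; apply: contraR j_neq => fj_neq0.
by rewrite (only_k0 j) //; move: j_mem; rewrite mem_index_iota => /andP[].
Qed.

Lemma zeta_rel_chain f g :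
  (forall n, (0 < n)%N -> g n = \sum_(1 <= k < n.+1) f k) -> zeta_rel coef_chain f g.
Proof.
move=> g_psum n n_gt0; rewrite g_psum //.
have -> : \sum_(1 <= k < n.+1) f k = \sum_(1 <= k < n.+1) (1%N)%:R * f k.
  by apply: eq_bigr => k _; rewrite mul1r.
rewrite -(sum_antidiagonal (fun=> 1%N)).
by apply: eq_bigr => d _; apply: eq_bigr => k _; rewrite /coef_chain muln1.
Qed.

Lemma not_propertyR_chain : ~ propertyR coef_chain.
Proof.
pose f (n : nat) : C := (n == 1)%:R - (n == 2)%:R.
pose g (n : nat) : C := (n == 1)%:R.
have fg : zeta_rel coef_chain f g.
  apply: zeta_rel_chain => -[|[|m]] // _; first by rewrite big_nat1 /f /g subr0.
  rewrite big_ltn // big_ltn // big_nat_cond big1 => [|k /andP[/andP[k_gt2 _] _]].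
    by rewrite /f /g /= subr0 sub0r addr0 subrr.
  by rewrite /f; case: k k_gt2 => [|[|[|k]]] //= _; rewrite subrr.
have one_neq0 : (1 : C) <> 0 by apply/eqP; exact: oner_neq0.
have f_nz : nonzero_fun f by exists 1%N; rewrite /f /= subr0.
have g_nz : nonzero_fun g by exists 1%N.
move=> /(_ f g f_nz g_nz fg) [].
- by apply: eventually_zero_finite_support; exists 2%N => -[|[|[|n]]] //; rewrite /f subrr.
- by apply: eventually_zero_finite_support; exists 1%N => -[|[|n]].
Qed.

Theorem theorem1p8 :
  propertyR coef_div /\
  propertyR coef_sets /\
  (forall p e : nat, prime p -> (0 < e)%N -> propertyR (coef_subspaces (p ^ e))) /\
  ~ propertyR coef_chain.
Proof.
split; first exact: propertyR_div.
split; first exact: propertyR_sets.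
split; last exact: not_propertyR_chain.
by move=> p e p_prime _; apply: propertyR_subspaces; rewrite expn_gt0 prime_gt0.
Qed.
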